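(* Let $\mathbf{Lim}$ be the category of limit spaces, with cylinder $IX = X \times [0,1]$, $i_k(x) = (x,k)$ ($k=0,1$), $p : X\times[0,1]\to X$ the projection, initial object $\varnothing$ (the empty space), and $\mathrm{cof}$ the class of morphisms $i : B \to A$ having the homotopy extension property (defined below). Then $(\mathbf{Lim}, I, \mathrm{cof}, \varnothing)$ is an $I$-category.
   Context: Limit spaces: a convergence space is a set $X$ with a relation between filters on $X$ and points (written $\lambda \to x$) such that $\lambda \to x$, $\lambda\subseteq\lambda'$ imply $\lambda'\to x$, and the principal ultrafilter $\dot x \to x$; it is a limit space iff moreover $\lambda\to x$ and $\lambda'\to x$ imply $\lambda\cap\lambda'\to x$. Continuous maps: $\lambda\to x$ implies $f(\lambda)\to f(x)$, where $f(\lambda)$ is the filter generated by images. $[0,1]$ has its topological convergence ($\lambda \to x$ iff $\lambda$ contains the neighbourhood filter of $x$); products and pushouts are the initial/final structures in $\mathbf{Lim}$. Homotopy extension property of $i : B \to A$: for $k = 0$ and $k=1$, for every object $Y$ and morphisms $f : A \to Y$, $G : IB \to Y$ with $f \circ i = G \circ i_k$, there exists $H : IA \to Y$ with $H \circ i_k = f$ and $H \circ Ii = G$. An $I$-category is a tuple $(\mathcal{C}, \mathrm{cof}, (I,i_0,i_1,p), \varnothing)$ with $(I,i_0,i_1,p)$ a cylinder (functor $I$, natural transformations $i_0,i_1 : \mathrm{Id} \to I$, $p : I \to \mathrm{Id}$, $p i_k = \mathrm{id}$), $\varnothing$ an initial object, satisfying: (1) Cylinder axiom: $I\varnothing = \varnothing$.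 (2) Pushout axiom: for a cofibration $i : B \to A$ and any $f : B \to X$ the pushout $A \cup_B X$ exists, the induced map $\bar i : X \to A\cup_B X$ is a cofibration, and $I(A\cup_B X) = IA \cup_{IB} IX$. (3) Cofibration axiom: isomorphisms are cofibrations; $\varnothing \to X$ is a cofibration for every $X$; composites of cofibrations are cofibrations; every cofibration has the homotopy extension property. (4) Interchange axiom: for every $X$ there is $T : IIX \to IIX$ with $T i_k = I i_k$ and $T I(i_k) = i_k$ for $k=0,1$. (5) Relative cylinder axiom: for a cofibration $i : B \to A$, the map $j = (i_0, Ii, i_1) : A \cup_B IB \cup_B A \to IA$ induced from the pushout of $A \xleftarrow{i} B \xrightarrow{i_0} IB \xleftarrow{i_1} B \xrightarrow{i} A$ is a cofibration. *)

From Stdlib Require Import Reals Lra.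
Open Scope R_scope.

Definition isFilter {X : Type} (F : (X -> Prop) -> Prop) : Prop :=
  F (fun _ => True) /\ ~ F (fun _ => False) /\
  (forall U V : X -> Prop, F U -> (forall x, U x -> V x) -> F V) /\
  (forall U V : X -> Prop, F U -> F V -> F (fun x => U x /\ V x)).

Definition principal {X : Type} (x : X) : (X -> Prop) -> Prop := fun U => U x.
Definition fsub {X : Type} (F G : (X -> Prop) -> Prop) : Prop := forall U, F U -> G U.
Definition finter {X : Type} (F G : (X -> Prop) -> Prop) : (X -> Prop) -> Prop :=
  fun U => F U /\ G U.
Definition fimage {X Y : Type} (f : X -> Y) (F : (X -> Prop) -> Prop) : (Y -> Prop) -> Prop :=
  fun V => exists U, F U /\ forall u, U u -> V (f u).

Record LimSpace := {
  carrier :> Type;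
  lconv : ((carrier -> Prop) -> Prop) -> carrier -> Prop;
  lconv_filter : forall F x, lconv F x -> isFilter F;
  lconv_super : forall F G x, lconv F x -> isFilter G -> fsub F G -> lconv G x;
  lconv_principal : forall x, lconv (principal x) x;
  lconv_inter : forall F G x, lconv F x -> lconv G x -> lconv (finter F G) x }.
Arguments lconv {_} _ _.

Definition continuous {X Y : LimSpace} (f : X -> Y) : Prop :=
  forall F x, lconv F x -> lconv (fimage f F) (f x).

Definition isIso {X Y : LimSpace} (f : X -> Y) : Prop :=
  continuous f /\ exists g : Y -> X, continuous g /\
    (forall x, g (f x) = x) /\ (forall y, f (g y) = y).

Lemma isFilter_principal {X : Type} (x : X) : isFilter (principal x).
Proof.
  unfold isFilter, principal; repeat split; auto.
Qed.

Lemma isFilter_finter {X : Type} (F G : (X -> Prop) -> Prop) :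
  isFilter F -> isFilter G -> isFilter (finter F G).
Proof.
  unfold isFilter, finter.
  intros (F1 & F2 & F3 & F4) (G1 & G2 & G3 & G4).
  split; [split; auto|split; [|split]].
  - intros [H _]; auto.
  - intros U V [HF HG] HUV; split; eauto.
  - intros U V [HF HG] [HF' HG']; split; auto.
Qed.

Lemma isFilter_fimage {X Y : Type} (f : X -> Y) F :
  isFilter F -> isFilter (fimage f F).
Proof.
  unfold isFilter, fimage.
  intros (F1 & F2 & F3 & F4).
  split; [|split; [|split]].
  - exists (fun _ => True); split; auto.
  - intros [W [HW HWV]]. apply F2. apply (F3 W); auto.
  - intros U V [W [HW HWU]] HUV. exists W; split; auto.
  - intros U V [W [HW HWU]] [W' [HW' HWU']].
    exists (fun x => W x /\ W' x); split; auto.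
    intros u [h1 h2]; split; auto.
Qed.

Lemma fimage_principal {X Y : Type} (f : X -> Y) (x : X) :
  fsub (principal (f x)) (fimage f (principal x)).
Proof.
  intros V HV. exists (fun u => V (f u)); split; auto.
Qed.

Lemma fimage_mono {X Y : Type} (f : X -> Y) F G :
  fsub F G -> fsub (fimage f F) (fimage f G).
Proof.
  intros H V [U [HU HUV]]; exists U; split; auto.
Qed.

Lemma fimage_finter {X Y : Type} (f : X -> Y) F G :
  isFilter F -> isFilter G ->
  fsub (finter (fimage f F) (fimage f G)) (fimage f (finter F G)).
Proof.
  intros (F1 & F2 & F3 & F4) (G1 & G2 & G3 & G4) V [[U [HU HUV]] [U' [HU' HUV']]].
  exists (fun x => U x \/ U' x); split.
  - split; [apply (F3 U) | apply (G3 U')]; auto.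
  - intros u [h|h]; auto.
Qed.

Definition I01 : Type := {r : R | 0 <= r <= 1}.

Definition I01_conv (F : (I01 -> Prop) -> Prop) (t : I01) : Prop :=
  isFilter F /\
  forall eps, 0 < eps -> F (fun s => Rabs (proj1_sig s - proj1_sig t) < eps).

Lemma I01_conv_filter : forall F x, I01_conv F x -> isFilter F.
Proof. intros F x [H _]; exact H. Qed.

Lemma I01_conv_super : forall F G x, I01_conv F x -> isFilter G -> fsub F G -> I01_conv G x.
Proof. intros F G x [HF Hc] HG Hs; split; auto. Qed.

Lemma I01_conv_principal : forall x, I01_conv (principal x) x.
Proof.
  intros x; split; [apply isFilter_principal|].
  intros eps He; unfold principal. rewrite Rminus_diag, Rabs_R0; exact He.
Qed.

Lemma I01_conv_inter : forall F G x, I01_conv F x -> I01_conv G x -> I01_conv (finter F G) x.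
Proof.
  intros F G x [HF Hc] [HG Hc']; split.
  - apply isFilter_finter; auto.
  - intros eps He; split; auto.
Qed.

Definition UnitInterval : LimSpace :=
  {| carrier := I01; lconv := I01_conv;
     lconv_filter := I01_conv_filter; lconv_super := I01_conv_super;
     lconv_principal := I01_conv_principal; lconv_inter := I01_conv_inter |}.

Definition I01_zero : I01 := exist _ 0 (conj (Rle_refl 0) Rle_0_1).
Definition I01_one : I01 := exist _ 1 (conj Rle_0_1 (Rle_refl 1)).
Definition endpt (k : bool) : I01 := if k then I01_one else I01_zero.

Section Cyl.
Variable X : LimSpace.

Definition cyl_conv (F : (X * I01 -> Prop) -> Prop) (p : X * I01) : Prop :=
  isFilter F /\ lconv (fimage fst F) (fst p) /\ I01_conv (fimage snd F) (snd p).

Lemma cyl_conv_filter : forall F x, cyl_conv F x -> isFilter F.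
Proof. intros F x [H _]; exact H. Qed.

Lemma cyl_conv_super : forall F G x, cyl_conv F x -> isFilter G -> fsub F G -> cyl_conv G x.
Proof.
  intros F G x [HF [H1 H2]] HG Hs; split; [auto|split].
  - apply (lconv_super X (fimage fst F)); auto.
    + apply isFilter_fimage; auto.
    + apply fimage_mono; auto.
  - apply (I01_conv_super (fimage snd F)); auto.
    + apply isFilter_fimage; auto.
    + apply fimage_mono; auto.
Qed.

Lemma cyl_conv_principal : forall x, cyl_conv (principal x) x.
Proof.
  intros x; split; [apply isFilter_principal|split].
  - apply (lconv_super X (principal (fst x))).
    + apply lconv_principal.
    + apply isFilter_fimage, isFilter_principal.
    + apply fimage_principal.
  - apply (I01_conv_super (principal (snd x))).
    + apply I01_conv_principal.
    + apply isFilter_fimage, isFilter_principal.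
    + apply fimage_principal.
Qed.

Lemma cyl_conv_inter : forall F G x, cyl_conv F x -> cyl_conv G x -> cyl_conv (finter F G) x.
Proof.
  intros F G x [HF [H1 H2]] [HG [H1' H2']]; split; [apply isFilter_finter; auto|split].
  - apply (lconv_super X (finter (fimage fst F) (fimage fst G))).
    + apply lconv_inter; auto.
    + apply isFilter_fimage, isFilter_finter; auto.
    + apply fimage_finter; auto.
  - apply (I01_conv_super (finter (fimage snd F) (fimage snd G))).
    + apply I01_conv_inter; auto.
    + apply isFilter_fimage, isFilter_finter; auto.
    + apply fimage_finter; auto.
Qed.

Definition Cyl : LimSpace :=
  {| carrier := X * I01; lconv := cyl_conv;
     lconv_filter := cyl_conv_filter; lconv_super := cyl_conv_super;
     lconv_principal := cyl_conv_principal; lconv_inter := cyl_conv_inter |}.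
End Cyl.

Definition cyl_map {X Y : LimSpace} (f : X -> Y) : Cyl X -> Cyl Y :=
  fun z : X * I01 => (f (fst z), snd z).
Definition cyl_in {X : LimSpace} (k : bool) : X -> Cyl X :=
  fun x => (x, endpt k) : X * I01.
Definition cyl_proj {X : LimSpace} : Cyl X -> X := fun z : X * I01 => fst z.

Definition EmptyLim : LimSpace :=
  {| carrier := Empty_set;
     lconv := fun _ x => match x with end;
     lconv_filter := fun _ x _ => match x with end;
     lconv_super := fun _ _ x _ _ _ => match x with end;
     lconv_principal := fun x => match x with end;
     lconv_inter := fun _ _ x _ _ => match x with end |}.
Definition empty_map (X : LimSpace) : EmptyLim -> X := fun e => match e with end.

Definition HEP {B A : LimSpace} (i : B -> A) : Prop :=
  forall (k : bool) (Y : LimSpace) (f : A -> Y) (G : Cyl B -> Y),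
    continuous f -> continuous G ->
    (forall b, f (i b) = G (cyl_in k b)) ->
    exists H : Cyl A -> Y, continuous H /\
      (forall a, H (cyl_in k a) = f a) /\ (forall z, H (cyl_map i z) = G z).

Definition cof {B A : LimSpace} (i : B -> A) : Prop := continuous i /\ HEP i.

Definition IsPushout {B A X P : LimSpace} (i : B -> A) (f : B -> X)
    (u : A -> P) (v : X -> P) : Prop :=
  continuous u /\ continuous v /\ (forall b, u (i b) = v (f b)) /\
  forall (Y : LimSpace) (g : A -> Y) (h : X -> Y),
    continuous g -> continuous h -> (forall b, g (i b) = h (f b)) ->
    exists k : P -> Y, continuous k /\
      (forall a, k (u a) = g a) /\ (forall x, k (v x) = h x) /\
      (forall k' : P -> Y, continuous k' ->
         (forall a, k' (u a) = g a) -> (forall x, k' (v x) = h x) ->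
         forall p, k' p = k p).

(** colimit of  A <-i- B -i0-> IB <-i1- B -i-> A,  i.e. A ∪_B IB ∪_B A *)
Definition IsRelCylColimit {B A P : LimSpace} (i : B -> A)
    (a0 : A -> P) (c : Cyl B -> P) (a1 : A -> P) : Prop :=
  continuous a0 /\ continuous c /\ continuous a1 /\
  (forall b, a0 (i b) = c (cyl_in false b)) /\
  (forall b, a1 (i b) = c (cyl_in true b)) /\
  forall (Y : LimSpace) (g0 : A -> Y) (h : Cyl B -> Y) (g1 : A -> Y),
    continuous g0 -> continuous h -> continuous g1 ->
    (forall b, g0 (i b) = h (cyl_in false b)) ->
    (forall b, g1 (i b) = h (cyl_in true b)) ->
    exists k : P -> Y, continuous k /\
      (forall a, k (a0 a) = g0 a) /\ (forall z, k (c z) = h z) /\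
      (forall a, k (a1 a) = g1 a) /\
      (forall k' : P -> Y, continuous k' ->
         (forall a, k' (a0 a) = g0 a) -> (forall z, k' (c z) = h z) ->
         (forall a, k' (a1 a) = g1 a) -> forall p, k' p = k p).

(** (I, i0, i1, p) is a cylinder: I a functor, i_k and p natural, p i_k = id;
    ∅ is an initial object. *)
Definition Lim_cylinder_data : Prop :=
  (forall (X Y : LimSpace) (f : X -> Y), continuous f -> continuous (cyl_map f)) /\
  (forall (X : LimSpace) (z : Cyl X), cyl_map (fun x : X => x) z = z) /\
  (forall (X Y Z : LimSpace) (f : X -> Y) (g : Y -> Z) (z : Cyl X),
      cyl_map (fun x => g (f x)) z = cyl_map g (cyl_map f z)) /\
  (forall (X : LimSpace) (k : bool), continuous (@cyl_in X k)) /\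
  (forall X : LimSpace, continuous (@cyl_proj X)) /\
  (forall (X Y : LimSpace) (f : X -> Y) (k : bool) (x : X),
      cyl_map f (cyl_in k x) = cyl_in k (f x)) /\
  (forall (X Y : LimSpace) (f : X -> Y) (z : Cyl X),
      f (cyl_proj z) = cyl_proj (cyl_map f z)) /\
  (forall (X : LimSpace) (k : bool) (x : X), cyl_proj (cyl_in k x) = x) /\
  (forall Y : LimSpace, continuous (empty_map Y) /\
     forall g : EmptyLim -> Y, continuous g -> forall e, g e = empty_map Y e).

Definition cylinder_axiom : Prop :=
  exists f : Cyl EmptyLim -> EmptyLim, isIso f.

Definition pushout_axiom : Prop :=
  forall (B A X : LimSpace) (i : B -> A) (f : B -> X),
    cof i -> continuous f ->
    exists (P : LimSpace) (u : A -> P) (v : X -> P),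
      IsPushout i f u v /\ cof v /\
      IsPushout (cyl_map i) (cyl_map f) (cyl_map u) (cyl_map v).

Definition cofibration_axiom : Prop :=
  (forall (A B : LimSpace) (f : A -> B), isIso f -> cof f) /\
  (forall X : LimSpace, cof (empty_map X)) /\
  (forall (A B C : LimSpace) (f : A -> B) (g : B -> C),
      cof f -> cof g -> cof (fun a => g (f a))) /\
  (forall (B A : LimSpace) (i : B -> A), cof i -> HEP i).

Definition interchange_axiom : Prop :=
  forall X : LimSpace, exists T : Cyl (Cyl X) -> Cyl (Cyl X),
    continuous T /\
    forall k : bool,
      (forall z : Cyl X, T (cyl_in k z) = cyl_map (@cyl_in X k) z) /\
      (forall z : Cyl X, T (cyl_map (@cyl_in X k) z) = cyl_in k z).

Definition relative_cylinder_axiom : Prop :=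
  forall (B A : LimSpace) (i : B -> A), cof i ->
    (exists (P : LimSpace) (a0 : A -> P) (c : Cyl B -> P) (a1 : A -> P),
        IsRelCylColimit i a0 c a1) /\
    (forall (P : LimSpace) (a0 : A -> P) (c : Cyl B -> P) (a1 : A -> P),
        IsRelCylColimit i a0 c a1 ->
        forall j : P -> Cyl A, continuous j ->
          (forall a, j (a0 a) = cyl_in false a) ->
          (forall z, j (c z) = cyl_map i z) ->
          (forall a, j (a1 a) = cyl_in true a) ->
          cof j).

Definition Lim_is_ICategory : Prop :=
  Lim_cylinder_data /\ cylinder_axiom /\ pushout_axiom /\ cofibration_axiom /\
  interchange_axiom /\ relative_cylinder_axiom.

(** Limit spaces are modelled directly: coproducts and quotients carry final structures
    (quotient convergence is generated by images of convergent filters under finite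
    intersections) and the cylinder [X * [0,1]] carries the initial one.  The key structural
    fact is that the cylinder preserves quotients, hence pushouts; it is proved by induction
    on the generation of quotient convergence.  Cofibrations are then stable under pushout,
    and the HEP of [i] gives a retraction of [IA] onto the mapping cylinder [A ∪_B IB] along
    which homotopies extend, which shows that [Ii] has the HEP.  The relative cylinder map
    [A ∪_B IB ∪_B A -> IA] has the HEP because filling three faces of a square reduces, by
    reparametrising the square twice, to filling one face; the pieces are glued by pasting
    along closed sets [{phi <= 0}] and [{phi >= 0}]. *)

From Stdlib Require Import Reals Lra Classical FunctionalExtensionality
  PropExtensionality ProofIrrelevance ClassicalEpsilon Relations.
Open Scope R_scope.

Section Filters.
Context {X : Type} {F : (X -> Prop) -> Prop} (HF : isFilter F).

Lemma filter_true : F (fun _ => True).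
Proof. exact (proj1 HF). Qed.

Lemma filter_mono U V : F U -> (forall x, U x -> V x) -> F V.
Proof. destruct HF as (_ & _ & H & _); eauto. Qed.

Lemma filter_and U V : F U -> F V -> F (fun x => U x /\ V x).
Proof. destruct HF as (_ & _ & _ & H); eauto. Qed.

Lemma filter_all U : (forall x, U x) -> F U.
Proof. intros HU; apply (filter_mono _ _ filter_true); auto. Qed.

Lemma filter_inhabited U : F U -> exists x, U x.
Proof.
  intros HU; apply NNPP; intros N; apply (proj1 (proj2 HF)).
  apply (filter_mono U); [exact HU|]. intros x Hx; apply N; eauto.
Qed.

End Filters.

Definition fsup {X : Type} (F G : (X -> Prop) -> Prop) : (X -> Prop) -> Prop :=
  fun V => exists U W, F U /\ G W /\ forall x, U x -> W x -> V x.

Definition mesh {X : Type} (F G : (X -> Prop) -> Prop) : Prop :=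
  forall U W, F U -> G W -> exists x, U x /\ W x.

Definition fpreimage {X Y : Type} (f : X -> Y) (G : (Y -> Prop) -> Prop) : (X -> Prop) -> Prop :=
  fun V => exists U, G U /\ forall x, U (f x) -> V x.

Definition fset {X : Type} (P : X -> Prop) : (X -> Prop) -> Prop :=
  fun V => forall x, P x -> V x.

Lemma isFilter_fsup {X : Type} (F G : (X -> Prop) -> Prop) :
  isFilter F -> isFilter G -> mesh F G -> isFilter (fsup F G).
Proof.
  intros HF HG Hm; split; [|split; [|split]].
  - exists (fun _ => True), (fun _ => True); repeat split; apply filter_true; auto.
  - intros (U & W & HU & HW & HUW). destruct (Hm U W HU HW) as (x & Hx & Hx'); eauto.
  - intros V V' (U & W & HU & HW & HUW) HV. exists U, W; auto.
  - intros V V' (U & W & HU & HW & HUW) (U' & W' & HU' & HW' & HUW').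
    exists (fun x => U x /\ U' x), (fun x => W x /\ W' x).
    repeat split; try apply filter_and; auto; [apply HUW|apply HUW']; tauto.
Qed.

Lemma fsub_fsup_l {X : Type} (F G : (X -> Prop) -> Prop) : isFilter G -> fsub F (fsup F G).
Proof. intros HG U HU; exists U, (fun _ => True); repeat split; auto; apply filter_true; auto. Qed.

Lemma isFilter_fpreimage {X Y : Type} (f : X -> Y) (G : (Y -> Prop) -> Prop) :
  (forall y, exists x, f x = y) -> isFilter G -> isFilter (fpreimage f G).
Proof.
  intros Hf HG; split; [|split; [|split]].
  - exists (fun _ => True); split; auto; apply filter_true; auto.
  - intros (U & HU & HUf). destruct (filter_inhabited HG U HU) as (y & Hy).
    destruct (Hf y) as (x & <-); eauto.
  - intros V V' (U & HU & HUV) HV; exists U; auto.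
  - intros V V' (U & HU & HUV) (U' & HU' & HUV').
    exists (fun y => U y /\ U' y); split; [apply filter_and; auto|]. intros x []; auto.
Qed.

Lemma isFilter_fset_of_mesh {X : Type} (F : (X -> Prop) -> Prop) (P : X -> Prop) :
  isFilter F -> mesh F (fset P) -> isFilter (fset P).
Proof.
  intros HF Hm. destruct (Hm _ P (filter_true HF) (fun y H => H)) as (x0 & _ & Hx0).
  unfold fset; repeat split; auto. intros H; exact (H x0 Hx0).
Qed.

Lemma lconv_fimage_super {X Y : LimSpace} (f : X -> Y) F x G y :
  lconv F x -> lconv G y -> fsub G (fimage f F) -> lconv (fimage f F) y.
Proof.
  intros HF HG Hs. apply (lconv_super Y G); auto.
  apply isFilter_fimage, (lconv_filter X F x HF).
Qed.

Lemma fimage_comp_l {X Y Z : Type} (f : X -> Y) (g : Y -> Z) F :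
  fsub (fimage (fun x => g (f x)) F) (fimage g (fimage f F)).
Proof. intros V (U & HU & HUV). exists (fun y => V (g y)); split; auto. exists U; auto. Qed.

Lemma fimage_comp_r {X Y Z : Type} (f : X -> Y) (g : Y -> Z) F :
  fsub (fimage g (fimage f F)) (fimage (fun x => g (f x)) F).
Proof. intros V (U & (W & HW & HWU) & HUV). exists W; auto. Qed.

Lemma continuous_comp {X Y Z : LimSpace} (f : X -> Y) (g : Y -> Z) :
  continuous f -> continuous g -> continuous (fun x => g (f x)).
Proof.
  intros Hf Hg F x HF.
  exact (lconv_fimage_super _ F x _ _ HF (Hg _ _ (Hf F x HF)) (fimage_comp_r f g F)).
Qed.

Lemma continuous_ext {X Y : LimSpace} (f g : X -> Y) :
  (forall x, f x = g x) -> continuous f -> continuous g.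
Proof. intros E; replace g with f; [auto|apply functional_extensionality; auto]. Qed.

Lemma continuous_id {X : LimSpace} : continuous (fun x : X => x).
Proof.
  intros F x HF. apply (lconv_fimage_super _ F x F x HF HF).
  intros U HU; exists U; auto.
Qed.

Lemma continuous_const {X Y : LimSpace} (y : Y) : continuous (fun _ : X => y).
Proof.
  intros F x HF. apply (lconv_fimage_super _ F x _ _ HF (lconv_principal Y y)).
  intros V HV. exists (fun _ => True); split; auto.
  apply filter_true, (lconv_filter X F x HF).
Qed.

Definition real_continuous {X : LimSpace} (phi : X -> R) : Prop :=
  forall F x, lconv F x -> forall eps, 0 < eps -> F (fun y => Rabs (phi y - phi x) < eps).

Definition clamp (r : R) : R := Rmax 0 (Rmin 1 r).

Section RealContinuous.
Context {X : LimSpace}.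

Lemma real_continuous_const c : real_continuous (fun _ : X => c).
Proof.
  intros F x HF eps He. apply (filter_all (lconv_filter X F x HF)).
  intros y; rewrite Rminus_diag, Rabs_R0; exact He.
Qed.

Lemma real_continuous_lipschitz (op : R -> R -> R) (K : R) (phi psi : X -> R) :
  0 < K -> (forall a b c d, Rabs (op a b - op c d) <= K * (Rabs (a - c) + Rabs (b - d))) ->
  real_continuous phi -> real_continuous psi -> real_continuous (fun x => op (phi x) (psi x)).
Proof.
  intros HK Hop Hphi Hpsi F x HF eps He.
  set (d := eps / (2 * K)).
  assert (Hd : 0 < d) by (apply Rdiv_lt_0_compat; lra).
  apply (filter_mono (lconv_filter X F x HF)
           (fun y => Rabs (phi y - phi x) < d /\ Rabs (psi y - psi x) < d)).
  - apply (filter_and (lconv_filter X F x HF)); [apply Hphi|apply Hpsi]; auto.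
  - intros y [h1 h2]. eapply Rle_lt_trans; [apply Hop|].
    replace eps with (K * (d + d)) by (unfold d; field; lra).
    apply Rmult_lt_compat_l; lra.
Qed.

Ltac lipschitz := intros a b c d; unfold Rmin, Rmax, Rabs;
  repeat destruct Rle_dec; repeat destruct Rcase_abs; lra.

Lemma real_continuous_plus (phi psi : X -> R) :
  real_continuous phi -> real_continuous psi -> real_continuous (fun x => phi x + psi x).
Proof. apply (real_continuous_lipschitz Rplus 1); [lra|lipschitz]. Qed.

Lemma real_continuous_minus (phi psi : X -> R) :
  real_continuous phi -> real_continuous psi -> real_continuous (fun x => phi x - psi x).
Proof. apply (real_continuous_lipschitz Rminus 1); [lra|lipschitz]. Qed.

Lemma real_continuous_min (phi psi : X -> R) :
  real_continuous phi -> real_continuous psi -> real_continuous (fun x => Rmin (phi x) (psi x)).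
Proof. apply (real_continuous_lipschitz Rmin 1); [lra|lipschitz]. Qed.

Lemma real_continuous_max (phi psi : X -> R) :
  real_continuous phi -> real_continuous psi -> real_continuous (fun x => Rmax (phi x) (psi x)).
Proof. apply (real_continuous_lipschitz Rmax 1); [lra|lipschitz]. Qed.

Lemma real_continuous_scal (c : R) (phi : X -> R) :
  real_continuous phi -> real_continuous (fun x => c * phi x).
Proof.
  intros H. apply (real_continuous_lipschitz (fun a _ => c * a) (Rabs c + 1) phi phi); auto.
  - pose proof (Rabs_pos c); lra.
  - intros a b a' b'. rewrite <- Rmult_minus_distr_l, Rabs_mult.
    pose proof (Rabs_pos c); pose proof (Rabs_pos (a - a')); pose proof (Rabs_pos (b - b')); nra.
Qed.

Lemma real_continuous_clamp (phi : X -> R) :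
  real_continuous phi -> real_continuous (fun x => clamp (phi x)).
Proof.
  intros H. apply (real_continuous_lipschitz (fun a _ => clamp a) 1 phi phi); auto; [lra|].
  unfold clamp; lipschitz.
Qed.

End RealContinuous.

Lemma clamp_bounds r : 0 <= clamp r <= 1.
Proof. unfold clamp, Rmax, Rmin; repeat destruct Rle_dec; lra. Qed.

Definition clampI (r : R) : I01 := exist _ (clamp r) (clamp_bounds r).

Lemma I01_ext (s t : I01) : proj1_sig s = proj1_sig t -> s = t.
Proof. destruct s, t; simpl; apply subset_eq_compat. Qed.

Ltac I01_bounds := repeat match goal with t : I01 |- _ =>
  lazymatch goal with
  | _ : 0 <= proj1_sig t <= 1 |- _ => fail
  | _ => assert (0 <= proj1_sig t <= 1) by exact (proj2_sig t)
  end end.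

Ltac I01_lra := I01_bounds; simpl in *; unfold clamp, Rmax, Rmin in *;
  repeat destruct Rle_dec; lra.

Ltac I01_congr := solve [unfold cyl_in, cyl_map, endpt; repeat match goal with
  | |- ?x = ?x => reflexivity
  | |- @eq I01 _ _ => apply I01_ext; I01_lra
  | |- (_, _) = (_, _) => f_equal
  | |- ?f _ = ?f _ => f_equal
  end].

Lemma continuous_fst {X : LimSpace} : @continuous (Cyl X) X (fun z => fst z).
Proof. intros F z HF; exact (proj1 (proj2 HF)). Qed.

Lemma continuous_snd {X : LimSpace} : @continuous (Cyl X) UnitInterval (fun z => snd z).
Proof. intros F z HF; exact (proj2 (proj2 HF)). Qed.

Lemma continuous_pair {W X : LimSpace} (h1 : W -> X) (h2 : W -> UnitInterval) :
  continuous h1 -> continuous h2 -> @continuous W (Cyl X) (fun w => (h1 w, h2 w)).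
Proof.
  intros H1 H2 F w HF. pose proof (lconv_filter W F w HF) as Hf.
  split; [apply isFilter_fimage; auto|split].
  - apply (lconv_super X _ _ _ (H1 F w HF)); [apply isFilter_fimage, isFilter_fimage; auto|].
    apply (fimage_comp_l (fun w => (h1 w, h2 w)) fst).
  - apply (I01_conv_super _ _ _ (H2 F w HF)); [apply isFilter_fimage, isFilter_fimage; auto|].
    apply (fimage_comp_l (fun w => (h1 w, h2 w)) snd).
Qed.

Lemma continuous_clampI {W : LimSpace} (phi : W -> R) :
  real_continuous phi -> @continuous W UnitInterval (fun w => clampI (phi w)).
Proof.
  intros Hphi F w HF. split; [apply isFilter_fimage, (lconv_filter W F w HF)|].
  intros eps He. exists (fun y => Rabs (clamp (phi y) - clamp (phi w)) < eps); split; auto.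
  apply real_continuous_clamp; auto.
Qed.

Lemma real_continuous_val {W : LimSpace} (h : W -> UnitInterval) :
  continuous h -> real_continuous (fun w => proj1_sig (h w)).
Proof.
  intros Hh F w HF eps He. destruct (proj2 (Hh F w HF) eps He) as (U & HU & HUV).
  apply (filter_mono (lconv_filter W F w HF) U); auto.
Qed.

Lemma continuous_fst_comp {W X : LimSpace} (h : W -> Cyl X) :
  continuous h -> continuous (fun w => fst (h w)).
Proof. intros Hh; exact (continuous_comp h _ Hh continuous_fst). Qed.

Lemma continuous_snd_comp {W X : LimSpace} (h : W -> Cyl X) :
  continuous h -> @continuous W UnitInterval (fun w => snd (h w)).
Proof. intros Hh; exact (continuous_comp h _ Hh continuous_snd). Qed.

Ltac continuity := repeat
  match goal with
  | H : ?G |- ?G => exact H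
  | |- continuous (fun x => x) => apply continuous_id
  | |- continuous fst => apply continuous_fst
  | |- continuous snd => apply continuous_snd
  | |- continuous (fun _ => _) => apply continuous_const
  | |- real_continuous (fun _ => _) => apply real_continuous_const
  | |- @continuous ?W (Cyl ?X) (fun w => (_, _)) => apply (@continuous_pair W X)
  | |- continuous (fun w => clampI _) => apply continuous_clampI
  | |- @continuous ?W ?X (fun w => fst _) => apply (@continuous_fst_comp W X)
  | |- continuous (fun w => snd _) => apply continuous_snd_comp
  | |- real_continuous (fun w => proj1_sig _) => apply real_continuous_val
  | |- real_continuous (fun w => _ + _) => apply real_continuous_plus
  | |- real_continuous (fun w => _ - _) => apply real_continuous_minus
  | |- real_continuous (fun w => _ * _) => apply real_continuous_scal
  | |- real_continuous (fun w => Rmin _ _) => apply real_continuous_min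
  | |- real_continuous (fun w => Rmax _ _) => apply real_continuous_max
  | |- continuous (fun x => ?g (@?f x)) =>
      lazymatch f with fun y => y => fail | _ =>
        lazymatch type of g with carrier ?Y -> _ => apply (@continuous_comp _ Y _ f g) end end
  end.

Lemma continuous_cyl_map {X Y : LimSpace} (f : X -> Y) : continuous f -> continuous (cyl_map f).
Proof. intros Hf; unfold cyl_map; continuity. Qed.

Lemma continuous_cyl_in {X : LimSpace} k : continuous (@cyl_in X k).
Proof. unfold cyl_in; continuity. Qed.

Definition cyl_swap {X : LimSpace} : Cyl (Cyl X) -> Cyl (Cyl X) :=
  fun w => ((fst (fst w), snd w), snd (fst w)).

Lemma continuous_cyl_swap {X : LimSpace} : @continuous (Cyl (Cyl X)) (Cyl (Cyl X)) cyl_swap.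
Proof. unfold cyl_swap; continuity. Qed.

Lemma Lim_cylinder_data_holds : Lim_cylinder_data.
Proof.
  split; [intros X Y f; apply continuous_cyl_map|].
  split; [intros X []; reflexivity|].
  split; [intros; reflexivity|].
  split; [intros X k; apply continuous_cyl_in|].
  split; [intros X; apply continuous_fst|].
  split; [intros; reflexivity|]. split; [intros; reflexivity|]. split; [intros; reflexivity|].
  intros Y; split; [intros F []|intros g _ []].
Qed.

Lemma cylinder_axiom_holds : cylinder_axiom.
Proof.
  exists (fun z : Cyl EmptyLim => fst z). split; [intros F [[] t]|].
  exists (fun e : EmptyLim => match e with end).
  split; [intros F []|split; [intros [[] t]|intros []]].
Qed.

Lemma interchange_axiom_holds : interchange_axiom.
Proof.
  intros X. exists cyl_swap.
  split; [apply continuous_cyl_swap|split; intros [x t]; reflexivity].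
Qed.

Definition prodF {X T : Type} (G : (X -> Prop) -> Prop) (N : (T -> Prop) -> Prop) :
  (X * T -> Prop) -> Prop :=
  fun W => exists U V, G U /\ N V /\ forall x t, U x -> V t -> W (x, t).

Lemma isFilter_prodF {X T : Type} G N : isFilter G -> isFilter N -> isFilter (@prodF X T G N).
Proof.
  intros HG HN. split; [|split; [|split]].
  - exists (fun _ => True), (fun _ => True). repeat split; apply filter_true; auto.
  - intros (U & V & HU & HV & HW).
    destruct (filter_inhabited HG U HU) as [x Hx], (filter_inhabited HN V HV) as [t Ht].
    exact (HW x t Hx Ht).
  - intros W W' (U & V & HU & HV & HW) HWW. exists U, V; auto.
  - intros W W' (U & V & HU & HV & HW) (U' & V' & HU' & HV' & HW').
    exists (fun x => U x /\ U' x), (fun t => V t /\ V' t).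
    repeat split; try apply filter_and; auto; [apply HW|apply HW']; tauto.
Qed.

Lemma lconv_prodF {X : LimSpace} (G : (X -> Prop) -> Prop) N a t :
  lconv G a -> I01_conv N t -> @lconv (Cyl X) (prodF G N) (a, t).
Proof.
  intros HG HN. pose proof (lconv_filter X G a HG) as Hg. pose proof (I01_conv_filter N t HN) as Hn.
  assert (Hp : isFilter (prodF G N)) by (apply isFilter_prodF; auto).
  split; [auto|split].
  - apply (lconv_super X G); [auto|apply isFilter_fimage; auto|].
    intros V HV. exists (fun p => V (fst p)); split; auto.
    exists V, (fun _ => True); repeat split; auto. apply filter_true; auto.
  - apply (I01_conv_super N); [auto|apply isFilter_fimage; auto|].
    intros V HV. exists (fun p => V (snd p)); split; auto.
    exists (fun _ => True), V; repeat split; auto. apply filter_true; auto.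
Qed.

Lemma lconv_fimage_cyl {C Y : LimSpace} {Z : Type} (e : C -> Z) (phi : Z * I01 -> Y)
    (L : (Z * I01 -> Prop) -> Prop) (G : (C -> Prop) -> Prop) (c : C) (t : I01) :
  @continuous (Cyl C) Y (fun w => phi (e (fst w), snd w)) ->
  isFilter L -> lconv G c -> fsub (fimage e G) (fimage fst L) -> I01_conv (fimage snd L) t ->
  lconv (fimage phi L) (phi (e c, t)).
Proof.
  intros Hphi HL HG HGL HN.
  apply (lconv_super Y _ _ _ (Hphi _ _ (lconv_prodF G _ c t HG HN)));
    [apply isFilter_fimage; auto|].
  intros V (W & (U & V' & HU & (W2 & HW2 & HW2V) & HW) & HWV).
  destruct (HGL (fun z => exists u, U u /\ e u = z)) as (W1 & HW1 & HW1U).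
  { exists U; split; eauto. }
  exists (fun w => W1 w /\ W2 w); split; [apply filter_and; auto|].
  intros [z s] [H1 H2]. destruct (HW1U _ H1) as (u & Hu & Hz); simpl in Hz; subst z.
  exact (HWV (u, s) (HW u s Hu (HW2V _ H2))).
Qed.

Lemma real_continuous_mesh_le {X : LimSpace} (phi : X -> R) (P : X -> Prop) F x :
  real_continuous phi -> lconv F x -> mesh F (fset P) -> (forall y, P y -> phi y <= 0) ->
  phi x <= 0.
Proof.
  intros Hphi HF Hm HP. apply Rnot_lt_le; intros Hpos.
  destruct (Hm _ P (Hphi F x HF (phi x) Hpos) (fun y H => H)) as (y & Hy & Hy').
  apply Rabs_def2 in Hy; specialize (HP y Hy'); lra.
Qed.

Lemma real_continuous_mesh_ge {X : LimSpace} (phi : X -> R) (P : X -> Prop) F x :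
  real_continuous phi -> lconv F x -> mesh F (fset P) -> (forall y, P y -> 0 <= phi y) ->
  0 <= phi x.
Proof.
  intros Hphi HF Hm HP. apply Rnot_lt_le; intros Hneg.
  destruct (Hm _ P (Hphi F x HF (- phi x) ltac:(lra)) (fun y H => H)) as (y & Hy & Hy').
  apply Rabs_def2 in Hy; specialize (HP y Hy'); lra.
Qed.

Lemma fsup_fset_cover {X : Type} (F : (X -> Prop) -> Prop) (P : X -> Prop) :
  isFilter F -> fsub (finter (fsup F (fset P)) (fsup F (fset (fun y => ~ P y)))) F.
Proof.
  intros HF V [(U1 & W1 & HU1 & HW1 & HV1) (U2 & W2 & HU2 & HW2 & HV2)].
  apply (filter_mono HF _ _ (filter_and HF _ _ HU1 HU2)).
  intros y [h1 h2]. destruct (classic (P y)); [apply HV1|apply HV2]; auto.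
Qed.

Lemma not_mesh_fset {X : Type} (F : (X -> Prop) -> Prop) (P Q : X -> Prop) :
  isFilter F -> ~ mesh F (fset Q) -> (forall y, ~ Q y -> P y) ->
  mesh F (fset P) /\ fsub (fsup F (fset P)) F.
Proof.
  intros HF HQ HPQ.
  assert (HU : exists U, F U /\ forall y, U y -> P y).
  { apply NNPP; intros N; apply HQ; intros U W HU HW.
    apply NNPP; intros N'; apply N; exists U; split; auto.
    intros y Hy; apply HPQ; intros Hq; apply N'; eauto. }
  destruct HU as (U & HU & HUP). split.
  - intros U' W HU' HW.
    destruct (filter_inhabited HF _ (filter_and HF _ _ HU' HU)) as (y & Hy & Hy'); eauto.
  - intros V (U' & W & HU' & HW & HV). apply (filter_mono HF _ _ (filter_and HF _ _ HU' HU)).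
    intros y []; auto.
Qed.

Lemma lconv_fimage_fsup_fset {X Y : LimSpace} (g h : X -> Y) (P : X -> Prop) F x :
  lconv F x -> continuous h -> mesh F (fset P) -> (forall y, P y -> g y = h y) ->
  lconv (fimage g (fsup F (fset P))) (h x).
Proof.
  intros HF Hh Hm Hgh. pose proof (lconv_filter X F x HF) as Hf.
  pose proof (isFilter_fset_of_mesh F P Hf Hm) as HP.
  assert (HFP : lconv (fsup F (fset P)) x).
  { apply (lconv_super X F); auto; [apply isFilter_fsup|apply fsub_fsup_l]; auto. }
  apply (lconv_fimage_super _ _ _ _ _ HFP (Hh _ _ HFP)).
  intros V (W & (U & U' & HU & HU' & HW) & HWV).
  exists (fun y => W y /\ P y); split.
  - exists U, P; split; [|split]; [auto|intros y Hy; exact Hy|intros y Hy HPy; split; auto].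
  - intros y [Hy HPy]; rewrite Hgh; auto.
Qed.

Lemma continuous_paste {X Y : LimSpace} (phi : X -> R) (g1 g2 : X -> Y) :
  real_continuous phi -> continuous g1 -> continuous g2 ->
  (forall x, phi x = 0 -> g1 x = g2 x) ->
  continuous (fun x => if Rle_dec (phi x) 0 then g1 x else g2 x).
Proof.
  intros Hphi H1 H2 Hagree F x HF. pose proof (lconv_filter X F x HF) as Hf.
  set (g := fun x => if Rle_dec (phi x) 0 then g1 x else g2 x).
  set (P := fun y => phi y <= 0); set (Q := fun y => ~ phi y <= 0).
  assert (HgP : forall y, P y -> g y = g1 y).
  { intros y Hy; unfold g; destruct Rle_dec; [reflexivity|contradiction]. }
  assert (HgQ : forall y, Q y -> g y = g2 y).
  { intros y Hy; unfold g; destruct Rle_dec; [contradiction|reflexivity]. }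
  assert (ConvP : mesh F (fset P) -> lconv (fimage g (fsup F (fset P))) (g x)).
  { intros Hm. replace (g x) with (g1 x); [apply lconv_fimage_fsup_fset; auto|].
    symmetry; apply HgP, (real_continuous_mesh_le phi P F x); auto. }
  assert (ConvQ : mesh F (fset Q) -> lconv (fimage g (fsup F (fset Q))) (g x)).
  { intros Hm. replace (g x) with (g2 x); [apply lconv_fimage_fsup_fset; auto|].
    assert (0 <= phi x).
    { apply (real_continuous_mesh_ge phi Q F x); auto. intros y Hy; unfold Q in Hy; lra. }
    unfold g; destruct Rle_dec; auto. symmetry; apply Hagree; lra. }
  destruct (classic (mesh F (fset P))) as [mP|nP]; destruct (classic (mesh F (fset Q))) as [mQ|nQ].
  - pose proof (isFilter_fsup _ _ Hf (isFilter_fset_of_mesh F P Hf mP) mP) as HFP.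
    pose proof (isFilter_fsup _ _ Hf (isFilter_fset_of_mesh F Q Hf mQ) mQ) as HFQ.
    apply (lconv_fimage_super _ _ _ _ _ HF (lconv_inter Y _ _ _ (ConvP mP) (ConvQ mQ))).
    intros V HV. apply (fimage_mono g _ _ (fsup_fset_cover F P Hf)), fimage_finter; auto.
  - destruct (not_mesh_fset F P Q Hf nQ) as [_ Hsub]; [exact (fun y => NNPP (P y))|].
    apply (lconv_fimage_super _ _ _ _ _ HF (ConvP mP)), fimage_mono, Hsub.
  - destruct (not_mesh_fset F Q P Hf nP) as [_ Hsub]; [exact (fun y H => H)|].
    apply (lconv_fimage_super _ _ _ _ _ HF (ConvQ mQ)), fimage_mono, Hsub.
  - destruct (not_mesh_fset F P Q Hf nQ) as [mP _]; [exact (fun y => NNPP (P y))|].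
    contradiction.
Qed.

Definition sum_conv (A X : LimSpace) (F : (A + X -> Prop) -> Prop) (z : A + X) : Prop :=
  isFilter F /\
  match z with
  | inl a => exists G, lconv G a /\ fsub (fimage inl G) F
  | inr x => exists G, lconv G x /\ fsub (fimage inr G) F
  end.

Lemma sum_conv_filter A X : forall F z, sum_conv A X F z -> isFilter F.
Proof. intros F z [H _]; exact H. Qed.

Lemma sum_conv_super A X :
  forall F G z, sum_conv A X F z -> isFilter G -> fsub F G -> sum_conv A X G z.
Proof.
  intros F G [a|x] (HF & H & H1 & H2) HG Hs; split; auto; exists H; split; auto;
    intros U HU; auto.
Qed.

Lemma sum_conv_principal A X : forall z, sum_conv A X (principal z) z.
Proof.
  intros [a|x]; (split; [apply isFilter_principal|]);
    [exists (principal a)|exists (principal x)]; split;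
    try apply lconv_principal; intros V (U & HU & HUV); apply HUV, HU.
Qed.

Lemma sum_conv_inter A X :
  forall F G z, sum_conv A X F z -> sum_conv A X G z -> sum_conv A X (finter F G) z.
Proof.
  intros F G [a|x] (HF & H1 & L1 & S1) (HG & H2 & L2 & S2);
    (split; [apply isFilter_finter; auto|]);
    exists (finter H1 H2); (split; [apply lconv_inter; auto|]);
    intros V (U & [HU1 HU2] & HUV); split; [apply S1|apply S2|apply S1|apply S2]; exists U; auto.
Qed.

Definition LimSum (A X : LimSpace) : LimSpace :=
  {| carrier := A + X; lconv := sum_conv A X;
     lconv_filter := sum_conv_filter A X; lconv_super := sum_conv_super A X;
     lconv_principal := sum_conv_principal A X; lconv_inter := sum_conv_inter A X |}.

Lemma continuous_inl {A X : LimSpace} : @continuous A (LimSum A X) inl.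
Proof.
  intros F a HF. split; [apply isFilter_fimage, (lconv_filter A F a HF)|].
  exists F; split; auto. intros U HU; auto.
Qed.

Lemma continuous_inr {A X : LimSpace} : @continuous X (LimSum A X) inr.
Proof.
  intros F x HF. split; [apply isFilter_fimage, (lconv_filter X F x HF)|].
  exists F; split; auto. intros U HU; auto.
Qed.

Definition sum_elim {A X Y : Type} (g : A -> Y) (h : X -> Y) (z : A + X) : Y :=
  match z with inl a => g a | inr x => h x end.

Definition cyl_sum_elim {A X Y : Type} (g : A * I01 -> Y) (h : X * I01 -> Y)
    (w : (A + X) * I01) : Y :=
  match fst w with inl a => g (a, snd w) | inr x => h (x, snd w) end.

Lemma continuous_cyl_sum_elim {A X Y : LimSpace} (g : Cyl A -> Y) (h : Cyl X -> Y) :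
  continuous g -> continuous h -> @continuous (Cyl (LimSum A X)) Y (cyl_sum_elim g h).
Proof.
  intros Hg Hh L [[a|x] t] (HL & (_ & G & HG & HGL) & HN).
  - apply (lconv_fimage_cyl inl _ L G a t); auto.
    apply (continuous_ext g); [intros []; reflexivity|auto].
  - apply (lconv_fimage_cyl inr _ L G x t); auto.
    apply (continuous_ext h); [intros []; reflexivity|auto].
Qed.

Lemma continuous_sum_elim {A X Y : LimSpace} (g : A -> Y) (h : X -> Y) :
  continuous g -> continuous h -> @continuous (LimSum A X) Y (sum_elim g h).
Proof.
  intros Hg Hh.
  apply (continuous_ext (fun z => cyl_sum_elim (fun w : Cyl A => g (fst w))
                                    (fun w : Cyl X => h (fst w)) (@cyl_in (LimSum A X) false z)));
    [intros []; reflexivity|].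
  apply (continuous_comp _ _ (continuous_cyl_in false)), continuous_cyl_sum_elim; continuity.
Qed.

Section Quotient.
Context {Z : LimSpace} (Rl : Z -> Z -> Prop).
Local Notation eqv := (clos_refl_sym_trans Z Rl).

Definition quot_carrier : Type := {S : Z -> Prop | exists z, S = eqv z}.

Definition qmap (z : Z) : quot_carrier := exist _ (eqv z) (ex_intro _ z eq_refl).

Lemma qmap_eqv z w : eqv z w -> qmap z = qmap w.
Proof.
  intros H. apply subset_eq_compat, functional_extensionality; intros u.
  apply propositional_extensionality; split; intros Hu.
  - apply (rst_trans _ _ _ z); [apply rst_sym|]; auto.
  - apply (rst_trans _ _ _ w); auto.
Qed.

Lemma qmap_rel z w : Rl z w -> qmap z = qmap w.
Proof. intros H; apply qmap_eqv, rst_step, H. Qed.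

Lemma eqv_qmap z w : qmap z = qmap w -> eqv z w.
Proof. intros H. apply (f_equal (@proj1_sig _ _)) in H; simpl in H. rewrite H; apply rst_refl. Qed.

Lemma qmap_surj (c : quot_carrier) : exists z, qmap z = c.
Proof. destruct c as [S [z ->]]. exists z. apply subset_eq_compat; reflexivity. Qed.

Definition qrep (c : quot_carrier) : Z :=
  proj1_sig (constructive_indefinite_description _ (qmap_surj c)).

Lemma qmap_qrep c : qmap (qrep c) = c.
Proof. exact (proj2_sig (constructive_indefinite_description _ (qmap_surj c))). Qed.

Lemma eqv_respect {Y : Type} (g : Z -> Y) :
  (forall z w, Rl z w -> g z = g w) -> forall z w, eqv z w -> g z = g w.
Proof. intros H z w E; induction E; [apply H; auto|reflexivity|symmetry|etransitivity]; eauto. Qed.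

Inductive qconv : ((quot_carrier -> Prop) -> Prop) -> quot_carrier -> Prop :=
  | qconv_image F G z : isFilter F -> lconv G z -> fsub (fimage qmap G) F -> qconv F (qmap z)
  | qconv_finter F c F1 F2 : isFilter F -> qconv F1 c -> qconv F2 c -> fsub (finter F1 F2) F ->
      qconv F c.

Lemma qconv_filter : forall F c, qconv F c -> isFilter F.
Proof. intros F c []; auto. Qed.

Lemma qconv_super : forall F G c, qconv F c -> isFilter G -> fsub F G -> qconv G c.
Proof.
  intros F G c [F' G' z HF HG' Hs|F' c' F1 F2 HF H1 H2 Hs] HG HFG.
  - apply (qconv_image G G' z); auto. intros U HU; auto.
  - apply (qconv_finter G c' F1 F2); auto. intros U HU; auto.
Qed.

Lemma qconv_principal : forall c, qconv (principal c) c.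
Proof.
  intros c. destruct (qmap_surj c) as [z <-].
  apply (qconv_image _ (principal z) z); [apply isFilter_principal|apply lconv_principal|].
  intros V (U & HU & HUV). apply HUV, HU.
Qed.

Lemma qconv_inter : forall F G c, qconv F c -> qconv G c -> qconv (finter F G) c.
Proof.
  intros F G c H1 H2. apply (qconv_finter _ c F G); auto; [|intros U HU; auto].
  apply isFilter_finter; eapply qconv_filter; eauto.
Qed.

Definition Quot : LimSpace :=
  {| carrier := quot_carrier; lconv := qconv;
     lconv_filter := qconv_filter; lconv_super := qconv_super;
     lconv_principal := qconv_principal; lconv_inter := qconv_inter |}.

Lemma continuous_qmap : @continuous Z Quot qmap.
Proof.
  intros F z HF. apply (qconv_image _ F z); auto; [|intros U HU; auto].
  apply isFilter_fimage, (lconv_filter Z F z HF).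
Qed.

End Quotient.

(** * The cylinder preserves quotients *)

Section FilterSplitting.
Context {W C : Type} (f : W -> C) (L : (W -> Prop) -> Prop) (F1 F2 : (C -> Prop) -> Prop).
Hypotheses (HL : isFilter L) (HF1 : isFilter F1) (HF2 : isFilter F2)
  (HsL : fsub (finter F1 F2) (fimage f L)).

Lemma fsub_fimage_of_not_mesh : ~ mesh L (fpreimage f F1) -> fsub F2 (fimage f L).
Proof.
  intros Hm U2 HU2.
  assert (Hd : exists U1 W1, F1 U1 /\ L W1 /\ forall w, W1 w -> ~ U1 (f w)).
  { apply NNPP; intros N; apply Hm; intros W1 P1 HW1 (U1 & HU1 & HP1).
    apply NNPP; intros N'; apply N; exists U1, W1; repeat split; auto.
    intros w Hw Hu; apply N'; eauto. }
  destruct Hd as (U1 & W1 & HU1 & HW1 & Hdisj).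
  destruct (HsL (fun c => U1 c \/ U2 c)) as (W2 & HW2 & HW2U).
  { split; [apply (filter_mono HF1 U1)|apply (filter_mono HF2 U2)]; auto. }
  exists (fun w => W1 w /\ W2 w); split; [apply filter_and; auto|].
  intros w [h1 h2]. destruct (HW2U w h2); auto. exfalso; apply (Hdisj w); auto.
Qed.

Lemma fsub_finter_fsup_fpreimage :
  fsub (finter (fsup L (fpreimage f F1)) (fsup L (fpreimage f F2))) L.
Proof.
  intros V [(W1 & P1 & HW1 & (U1 & HU1 & HP1) & HV1) (W2 & P2 & HW2 & (U2 & HU2 & HP2) & HV2)].
  destruct (HsL (fun c => U1 c \/ U2 c)) as (W3 & HW3 & HW3U).
  { split; [apply (filter_mono HF1 U1)|apply (filter_mono HF2 U2)]; auto. }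
  apply (filter_mono HL (fun w => W1 w /\ W2 w /\ W3 w)); [repeat apply filter_and; auto|].
  intros w (h1 & h2 & h3). destruct (HW3U w h3); [apply HV1|apply HV2]; auto.
Qed.

End FilterSplitting.

Lemma cyl_filter_refine {Z : Type} (L : (Z * I01 -> Prop) -> Prop) (G : (Z -> Prop) -> Prop) t :
  isFilter L -> isFilter G -> mesh L (fpreimage fst G) -> I01_conv (fimage snd L) t ->
  let L' := fsup L (fpreimage fst G) in
  isFilter L' /\ fsub G (fimage fst L') /\ I01_conv (fimage snd L') t.
Proof.
  intros HL HG Hm HN L'.
  assert (HP : isFilter (fpreimage (@fst Z I01) G)).
  { apply isFilter_fpreimage; auto. intros z; exists (z, I01_zero); reflexivity. }
  assert (HL' : isFilter L') by (apply isFilter_fsup; auto).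
  split; [auto|split].
  - intros U HU. exists (fun w => U (fst w)); split; auto.
    exists (fun _ => True), (fun w => U (fst w)); repeat split; auto; [apply filter_true; auto|].
    exists U; auto.
  - apply (I01_conv_super _ _ _ HN); [apply isFilter_fimage; auto|].
    apply fimage_mono, fsub_fsup_l; auto.
Qed.

Section CylinderQuotient.
Context {Z Y : LimSpace} (Rl : Z -> Z -> Prop) (k : quot_carrier Rl * I01 -> Y).
Hypothesis Hk : @continuous (Cyl Z) Y (fun w => k (qmap Rl (fst w), snd w)).

(** By induction on the quotient convergence; in the intersection step the filter [L] is
    refined along each of the two generating filters, unless one of them is already
    dominated by [L]. *)
Lemma lconv_fimage_cyl_quot F c : qconv Rl F c ->
  forall L t, isFilter L -> fsub F (fimage fst L) -> I01_conv (fimage snd L) t ->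
  lconv (fimage k L) (k (c, t)).
Proof.
  induction 1 as [F G z HF HG Hs|F c F1 F2 HF H1 IH1 H2 IH2 Hs]; intros L t HL HsL HN.
  - apply (lconv_fimage_cyl (qmap Rl) k L G z t); auto. intros U HU; auto.
  - pose proof (qconv_filter Rl _ _ H1) as Hf1; pose proof (qconv_filter Rl _ _ H2) as Hf2.
    assert (Hs12 : fsub (finter F1 F2) (fimage fst L)) by (intros U HU; auto).
    assert (Hs21 : fsub (finter F2 F1) (fimage fst L))
      by (intros U [HU HU']; apply HsL, Hs; split; auto).
    destruct (classic (mesh L (fpreimage fst F1))) as [m1|n1];
      [|apply IH2; auto; apply (fsub_fimage_of_not_mesh fst L F1 F2); auto].
    destruct (classic (mesh L (fpreimage fst F2))) as [m2|n2];
      [|apply IH1; auto; apply (fsub_fimage_of_not_mesh fst L F2 F1); auto].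
    destruct (cyl_filter_refine L F1 t HL Hf1 m1 HN) as (HL1 & Hs1 & HN1).
    destruct (cyl_filter_refine L F2 t HL Hf2 m2 HN) as (HL2 & Hs2 & HN2).
    pose proof (IH1 _ t HL1 Hs1 HN1) as C1; pose proof (IH2 _ t HL2 Hs2 HN2) as C2.
    apply (lconv_super Y _ _ _ (lconv_inter Y _ _ _ C1 C2)); [apply isFilter_fimage; auto|].
    intros V HV. apply (fimage_mono k _ _ (fsub_finter_fsup_fpreimage fst L F1 F2 HL Hf1 Hf2 Hs12)).
    apply fimage_finter; auto.
Qed.

Lemma continuous_of_cyl_quot : @continuous (Cyl (Quot Rl)) Y k.
Proof.
  intros L [c t] (HL & Hq & HN).
  exact (lconv_fimage_cyl_quot _ c Hq L t HL (fun U HU => HU) HN).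
Qed.

End CylinderQuotient.

Lemma continuous_of_quot {Z Y : LimSpace} (Rl : Z -> Z -> Prop) (k : Quot Rl -> Y) :
  continuous (fun z => k (qmap Rl z)) -> continuous k.
Proof.
  intros Hk.
  assert (C : @continuous (Cyl (Quot Rl)) Y (fun w => k (fst w))).
  { apply continuous_of_cyl_quot, (continuous_comp (fun w : Cyl Z => fst w) _ continuous_fst Hk). }
  exact (continuous_comp _ _ (continuous_cyl_in false) C).
Qed.

Definition qlift {Z : LimSpace} {Y : Type} (Rl : Z -> Z -> Prop) (g : Z -> Y)
    (c : quot_carrier Rl) : Y :=
  g (qrep Rl c).

Definition cyl_qlift {Z : LimSpace} {Y : Type} (Rl : Z -> Z -> Prop) (g : Z * I01 -> Y)
    (w : quot_carrier Rl * I01) : Y :=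
  g (qrep Rl (fst w), snd w).

Section QuotientLift.
Context {Z Y : LimSpace} (Rl : Z -> Z -> Prop).

Lemma qlift_qmap (g : Z -> Y) :
  (forall z w, Rl z w -> g z = g w) -> forall z, qlift Rl g (qmap Rl z) = g z.
Proof. intros H z. apply (eqv_respect Rl g H), eqv_qmap, qmap_qrep. Qed.

Lemma continuous_qlift (g : Z -> Y) :
  (forall z w, Rl z w -> g z = g w) -> continuous g -> @continuous (Quot Rl) Y (qlift Rl g).
Proof.
  intros H Hg. apply continuous_of_quot, (continuous_ext g); auto.
  intros z; rewrite qlift_qmap; auto.
Qed.

Lemma cyl_qlift_qmap (g : Z * I01 -> Y) :
  (forall z w t, Rl z w -> g (z, t) = g (w, t)) ->
  forall z t, cyl_qlift Rl g (qmap Rl z, t) = g (z, t).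
Proof.
  intros H z t. apply (eqv_respect Rl (fun x => g (x, t))); auto. apply eqv_qmap, qmap_qrep.
Qed.

Lemma continuous_cyl_qlift (g : Cyl Z -> Y) :
  (forall z w t, Rl z w -> g (z, t) = g (w, t)) -> continuous g ->
  @continuous (Cyl (Quot Rl)) Y (cyl_qlift Rl g).
Proof.
  intros H Hg. apply continuous_of_cyl_quot, (continuous_ext g); auto.
  intros [z t]; simpl; rewrite cyl_qlift_qmap; auto.
Qed.

End QuotientLift.

Definition HEP_at {B A : LimSpace} (k : bool) (i : B -> A) : Prop :=
  forall (Y : LimSpace) (f : A -> Y) (G : Cyl B -> Y),
    continuous f -> continuous G -> (forall b, f (i b) = G (cyl_in k b)) ->
    exists H : Cyl A -> Y, continuous H /\
      (forall a, H (cyl_in k a) = f a) /\ (forall z, H (cyl_map i z) = G z).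

Lemma cofibration_axiom_holds : cofibration_axiom.
Proof.
  split; [|split; [|split]].
  - intros A B f (Hf & g & Hg & Egf & Efg). split; auto.
    intros k Y h G Hh HG Hc. exists (fun z => G (cyl_map g z)). split; [|split].
    + apply (continuous_comp _ G); auto. apply continuous_cyl_map; auto.
    + intros b. change (G (cyl_in k (g b)) = h b). rewrite <- Hc, Efg; reflexivity.
    + intros [a t]. unfold cyl_map; simpl. rewrite Egf; reflexivity.
  - intros X. split; [intros F []|].
    intros k Y f G Hf HG Hc. exists (fun z : Cyl X => f (fst z)).
    split; [continuity|split; [reflexivity|intros [[] t]]].
  - intros A B C f g [Cf Hf] [Cg Hg]. split; [apply continuous_comp; auto|].
    intros k Y h G Hh HG Hc.
    destruct (Hf k Y (fun b => h (g b)) G (continuous_comp g h Cg Hh) HG Hc)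
      as (H1 & C1 & H1f & H1G).
    destruct (Hg k Y h H1 Hh C1 (fun b => eq_sym (H1f b))) as (H2 & C2 & H2h & H2H1).
    exists H2. split; [|split]; auto.
    intros z. exact (eq_trans (H2H1 (cyl_map f z)) (H1G z)).
  - intros B A i [_ H]; exact H.
Qed.

Definition cyl_rev {X : LimSpace} : Cyl X -> Cyl X :=
  fun z => (fst z, clampI (1 - proj1_sig (snd z))).

Lemma continuous_cyl_rev {X : LimSpace} : continuous (@cyl_rev X).
Proof. unfold cyl_rev; continuity. Qed.

Lemma cyl_rev_involutive {X : LimSpace} (z : Cyl X) : cyl_rev (cyl_rev z) = z.
Proof. destruct z as [x t]; unfold cyl_rev; simpl; I01_congr. Qed.

Lemma cyl_rev_in {X : LimSpace} k (x : X) : cyl_rev (cyl_in k x) = cyl_in (negb k) x.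
Proof. unfold cyl_rev, cyl_in; destruct k; simpl; I01_congr. Qed.

Lemma HEP_at_negb {B A : LimSpace} (i : B -> A) k : HEP_at k i -> HEP_at (negb k) i.
Proof.
  intros Hi Y f G Hf HG Hc.
  destruct (Hi Y f (fun z => G (cyl_rev z))) as (H & CH & Hf' & HG'); auto.
  { apply (continuous_comp _ G continuous_cyl_rev HG). }
  { intros b. rewrite cyl_rev_in; auto. }
  exists (fun z => H (cyl_rev z)). split; [apply (continuous_comp _ H continuous_cyl_rev CH)|split].
  - intros a. rewrite cyl_rev_in, Bool.negb_involutive; auto.
  - intros z. rewrite <- (cyl_rev_involutive z) at 2. exact (HG' (cyl_rev z)).
Qed.

Lemma HEP_of_HEP_at_false {B A : LimSpace} (i : B -> A) : HEP_at false i -> HEP i.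
Proof. intros Hi [|]; [exact (HEP_at_negb i false Hi)|exact Hi]. Qed.

(** The mapping cylinder [A ∪_B IB], glued along [i] and the end [k] of [IB]. *)
Definition mapcyl_rel {B A : LimSpace} (i : B -> A) (k : bool) (u v : LimSum A (Cyl B)) : Prop :=
  exists b, u = inl (i b) /\ v = inr (cyl_in k b).

Lemma mapcyl_retraction {B A : LimSpace} (i : B -> A) k : HEP_at k i ->
  exists r : Cyl A -> Quot (mapcyl_rel i k), continuous r /\
    (forall a, r (cyl_in k a) = qmap (mapcyl_rel i k) (inl a)) /\
    (forall z, r (cyl_map i z) = qmap (mapcyl_rel i k) (inr z)).
Proof.
  intros Hi. apply Hi.
  - exact (continuous_comp _ _ continuous_inl (continuous_qmap (mapcyl_rel i k))).
  - exact (continuous_comp _ _ continuous_inr (continuous_qmap (mapcyl_rel i k))).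
  - intros b. apply qmap_rel. exists b; auto.
Qed.

(** Extend along the retraction [r : IA -> A ∪_B IB], interchanging the two cylinder
    coordinates. *)
Lemma HEP_at_cyl_map {B A : LimSpace} (i : B -> A) k : HEP_at k i -> HEP_at k (cyl_map i).
Proof.
  intros Hi Y f G Hf HG Hc.
  destruct (mapcyl_retraction i k Hi) as (r & Cr & Hr_in & Hr_map).
  set (phi := cyl_sum_elim f (fun w => G (cyl_swap w)) : Cyl (LimSum A (Cyl B)) -> Y).
  assert (Hphi : forall u v t, mapcyl_rel i k u v -> phi (u, t) = phi (v, t)).
  { intros u v t (b & -> & ->). exact (Hc (b, t)). }
  exists (fun w => cyl_qlift (mapcyl_rel i k) phi (cyl_map r (cyl_swap w))). split; [|split].
  - apply (continuous_comp cyl_swap (fun w => cyl_qlift _ phi (cyl_map r w)) continuous_cyl_swap).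
    apply (continuous_comp (cyl_map r) (cyl_qlift _ phi) (continuous_cyl_map r Cr)).
    apply continuous_cyl_qlift; auto. apply continuous_cyl_sum_elim; auto.
    apply (continuous_comp _ G continuous_cyl_swap HG).
  - intros [a t]. change (cyl_qlift _ phi (r (cyl_in k a), t) = f (a, t)).
    rewrite Hr_in. exact (cyl_qlift_qmap _ phi Hphi (inl a) t).
  - intros [[b t] s]. change (cyl_qlift _ phi (r (cyl_map i (b, s)), t) = G ((b, t), s)).
    rewrite Hr_map. exact (cyl_qlift_qmap _ phi Hphi (inr (b, s)) t).
Qed.

Section ExtendFaces.
Context {B A : LimSpace} (i : B -> A) (Hi : HEP_at false (cyl_map i)).

(** The faces [t = 0] and [s = 0] of the square are unfolded onto the edge [s = 0] by
    [psi (x, y) = (y + max (2x - 1) 0, y + max (1 - 2x) 0)], which has the continuous right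
    inverse [theta (t, s) = ((t - s + 1) / 2, min t s)]. *)
Lemma extend_two_faces (Y : LimSpace) (Dl Db : Cyl A -> Y) (Gc : Cyl (Cyl B) -> Y) :
  continuous Dl -> continuous Db -> continuous Gc ->
  (forall a, Dl (a, I01_zero) = Db (a, I01_zero)) ->
  (forall b s, Dl (i b, s) = Gc ((b, I01_zero), s)) ->
  (forall b t, Db (i b, t) = Gc ((b, t), I01_zero)) ->
  exists H : Cyl (Cyl A) -> Y, continuous H /\
    (forall a s, H ((a, I01_zero), s) = Dl (a, s)) /\
    (forall a t, H ((a, t), I01_zero) = Db (a, t)) /\
    (forall b t s, H ((i b, t), s) = Gc ((b, t), s)).
Proof.
  intros HDl HDb HGc E0 El Eb.
  set (D := fun z : Cyl A =>
    if Rle_dec (2 * proj1_sig (snd z) - 1) 0 then Dl (fst z, clampI (1 - 2 * proj1_sig (snd z)))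
    else Db (fst z, clampI (2 * proj1_sig (snd z) - 1))).
  assert (HD : continuous D).
  { apply continuous_paste; continuity.
    intros [a x] Hx; simpl in Hx |- *.
    transitivity (Dl (a, I01_zero)); [|rewrite E0]; I01_congr. }
  set (Gc' := fun v : Cyl (Cyl B) =>
    Gc ((fst (fst v), clampI (proj1_sig (snd v) + Rmax (2 * proj1_sig (snd (fst v)) - 1) 0)),
        clampI (proj1_sig (snd v) + Rmax (1 - 2 * proj1_sig (snd (fst v))) 0))).
  assert (HGc' : continuous Gc') by (unfold Gc'; continuity).
  destruct (Hi Y D Gc' HD HGc') as (K & HK & HK_D & HK_Gc).
  { intros [b x]. unfold D, Gc'; simpl. destruct Rle_dec; [rewrite El|rewrite Eb]; I01_congr. }
  exists (fun v : Cyl (Cyl A) =>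
    K ((fst (fst v), clampI (/ 2 * (proj1_sig (snd (fst v)) - proj1_sig (snd v) + 1))),
       clampI (Rmin (proj1_sig (snd (fst v))) (proj1_sig (snd v))))).
  split; [continuity|split; [|split]].
  - intros a s. simpl.
    transitivity (K (@cyl_in (Cyl A) false (a, clampI (/ 2 * (0 - proj1_sig s + 1)))));
      [I01_congr|].
    rewrite HK_D. unfold D; simpl. destruct Rle_dec; [I01_congr|exfalso; I01_lra].
  - intros a t. simpl.
    transitivity (K (@cyl_in (Cyl A) false (a, clampI (/ 2 * (proj1_sig t + 1)))));
      [I01_congr|].
    rewrite HK_D. unfold D; simpl. destruct Rle_dec as [r|r].
    + replace t with I01_zero by I01_congr. rewrite <- E0. I01_congr.
    + I01_congr.
  - intros b t s. simpl.
    transitivity (K (cyl_map (cyl_map i)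
                       ((b, clampI (/ 2 * (proj1_sig t - proj1_sig s + 1))),
                        clampI (Rmin (proj1_sig t) (proj1_sig s)))));
      [reflexivity|].
    rewrite HK_Gc. unfold Gc'; simpl. I01_congr.
Qed.

(** After filling the faces [t = 0] and [s = 0], the triangle [t + s >= 1] is refilled: in
    the coordinates [(1 - t, t + s - 1)] it is a square with faces [G1] and the anti-diagonal. *)
Lemma extend_three_faces (Y : LimSpace) (f G0 G1 : Cyl A -> Y) (Gc : Cyl (Cyl B) -> Y) :
  continuous f -> continuous G0 -> continuous G1 -> continuous Gc ->
  (forall a, f (a, I01_zero) = G0 (a, I01_zero)) ->
  (forall a, f (a, I01_one) = G1 (a, I01_zero)) ->
  (forall b t, f (i b, t) = Gc ((b, t), I01_zero)) ->
  (forall b s, G0 (i b, s) = Gc ((b, I01_zero), s)) ->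
  (forall b s, G1 (i b, s) = Gc ((b, I01_one), s)) ->
  exists H : Cyl (Cyl A) -> Y, continuous H /\
    (forall a t, H ((a, t), I01_zero) = f (a, t)) /\
    (forall a s, H ((a, I01_zero), s) = G0 (a, s)) /\
    (forall a s, H ((a, I01_one), s) = G1 (a, s)) /\
    (forall b t s, H ((i b, t), s) = Gc ((b, t), s)).
Proof.
  intros Hf HG0 HG1 HGc E0 E1 Ef E0c E1c.
  destruct (extend_two_faces Y G0 f Gc HG0 Hf HGc (fun a => eq_sym (E0 a)) E0c Ef)
    as (H1 & C1 & H1_G0 & H1_f & H1_Gc).
  set (Db := fun z : Cyl A =>
    H1 ((fst z, clampI (1 - proj1_sig (snd z))), clampI (proj1_sig (snd z)))).
  set (Gc2 := fun v : Cyl (Cyl B) =>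
    Gc ((fst (fst v), clampI (1 - proj1_sig (snd (fst v)))),
        clampI (proj1_sig (snd (fst v)) + proj1_sig (snd v)))).
  assert (HDb : continuous Db) by (unfold Db; continuity).
  assert (HGc2 : continuous Gc2) by (unfold Gc2; continuity).
  assert (E1Db : forall a, G1 (a, I01_zero) = Db (a, I01_zero)).
  { intros a. unfold Db; simpl. rewrite <- E1, <- H1_f. I01_congr. }
  assert (E1Gc2 : forall b s, G1 (i b, s) = Gc2 ((b, I01_zero), s)).
  { intros b s. rewrite E1c. unfold Gc2; simpl. I01_congr. }
  assert (EDbGc2 : forall b t, Db (i b, t) = Gc2 ((b, t), I01_zero)).
  { intros b t. unfold Db, Gc2; simpl. rewrite H1_Gc. I01_congr. }
  destruct (extend_two_faces Y G1 Db Gc2 HG1 HDb HGc2 E1Db E1Gc2 EDbGc2)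
    as (H2 & C2 & H2_G1 & H2_Db & H2_Gc).
  exists (fun v : Cyl (Cyl A) =>
    if Rle_dec (proj1_sig (snd (fst v)) + proj1_sig (snd v) - 1) 0 then H1 v
    else H2 ((fst (fst v), clampI (1 - proj1_sig (snd (fst v)))),
             clampI (proj1_sig (snd (fst v)) + proj1_sig (snd v) - 1))).
  split; [apply continuous_paste; continuity|split; [|split; [|split]]].
  - intros [[a t] s] Hts; simpl in Hts |- *. symmetry.
    transitivity (H2 ((a, clampI (1 - proj1_sig t)), I01_zero)); [I01_congr|].
    rewrite H2_Db. unfold Db; simpl. I01_congr.
  - intros a t; simpl. destruct Rle_dec; [auto|exfalso; I01_lra].
  - intros a s; simpl. destruct Rle_dec; [auto|exfalso; I01_lra].
  - intros a s; simpl. destruct Rle_dec as [r|r].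
    + replace s with I01_zero by I01_congr. rewrite H1_f, E1. reflexivity.
    + transitivity (H2 ((a, I01_zero), s)); [I01_congr|auto].
  - intros b t s; simpl. destruct Rle_dec; [auto|].
    rewrite H2_Gc. unfold Gc2; simpl. I01_congr.
Qed.

End ExtendFaces.

Definition pushout_rel {B A X : LimSpace} (i : B -> A) (f : B -> X) (u v : LimSum A X) : Prop :=
  exists b, u = inl (i b) /\ v = inr (f b).

Section Pushout.
Context {B A X : LimSpace} (i : B -> A) (f : B -> X).
Let P := Quot (pushout_rel i f).
Let u : A -> P := fun a => qmap (pushout_rel i f) (inl a).
Let v : X -> P := fun x => qmap (pushout_rel i f) (inr x).

Lemma IsPushout_quot : IsPushout i f u v.
Proof.
  split; [exact (continuous_comp _ _ continuous_inl (continuous_qmap _))|].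
  split; [exact (continuous_comp _ _ continuous_inr (continuous_qmap _))|].
  split; [intros b; apply qmap_rel; exists b; auto|].
  intros Y g h Hg Hh E.
  assert (Hresp : forall z w, pushout_rel i f z w -> sum_elim g h z = sum_elim g h w)
    by (intros z w (b & -> & ->); apply E).
  exists (qlift (pushout_rel i f) (sum_elim g h : LimSum A X -> Y)).
  split; [apply continuous_qlift, continuous_sum_elim; auto|].
  split; [intros a; unfold u; rewrite qlift_qmap; auto|].
  split; [intros x; unfold v; rewrite qlift_qmap; auto|].
  intros k' Hk' Eu Ev p. destruct (qmap_surj _ p) as [[a|x] <-].
  - exact (eq_trans (Eu a) (eq_sym (qlift_qmap _ _ Hresp (inl a)))).
  - exact (eq_trans (Ev x) (eq_sym (qlift_qmap _ _ Hresp (inr x)))).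
Qed.

Lemma IsPushout_cyl_quot : IsPushout (cyl_map i) (cyl_map f) (cyl_map u) (cyl_map v).
Proof.
  split; [apply continuous_cyl_map, (continuous_comp _ _ continuous_inl (continuous_qmap _))|].
  split; [apply continuous_cyl_map, (continuous_comp _ _ continuous_inr (continuous_qmap _))|].
  split; [intros [b t]; unfold cyl_map; simpl; f_equal; apply qmap_rel; exists b; auto|].
  intros Y g h Hg Hh E.
  set (phi := cyl_sum_elim g h : Cyl (LimSum A X) -> Y).
  assert (Hresp : forall z w t, pushout_rel i f z w -> phi (z, t) = phi (w, t))
    by (intros z w t (b & -> & ->); apply (E (b, t))).
  exists (cyl_qlift (pushout_rel i f) phi).
  split; [apply continuous_cyl_qlift, continuous_cyl_sum_elim; auto|].
  split; [intros [a t]; exact (cyl_qlift_qmap _ phi Hresp (inl a) t)|].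
  split; [intros [x t]; exact (cyl_qlift_qmap _ phi Hresp (inr x) t)|].
  intros k' Hk' Eu Ev [p t]. destruct (qmap_surj _ p) as [[a|x] <-].
  - exact (eq_trans (Eu (a, t)) (eq_sym (cyl_qlift_qmap _ phi Hresp (inl a) t))).
  - exact (eq_trans (Ev (x, t)) (eq_sym (cyl_qlift_qmap _ phi Hresp (inr x) t))).
Qed.

End Pushout.

(** Extend on [IA] first, then glue with [G] on [IX], using that [I] preserves the
    pushout; the end [k] is right by uniqueness in the pushout. *)
Lemma HEP_pushout {B A X P : LimSpace} (i : B -> A) (f : B -> X) (u : A -> P) (v : X -> P) :
  HEP i -> continuous f -> IsPushout i f u v ->
  IsPushout (cyl_map i) (cyl_map f) (cyl_map u) (cyl_map v) -> HEP v.
Proof.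
  intros Hi Hf (Hu & Hv & Huv & PO) (_ & _ & _ & IPO) k Y g G Hg HG Hc.
  destruct (Hi k Y (fun a => g (u a)) (fun z => G (cyl_map f z))) as (HA & CA & HA_in & HA_map).
  { exact (continuous_comp u g Hu Hg). }
  { exact (continuous_comp _ G (continuous_cyl_map f Hf) HG). }
  { intros b. rewrite Huv. apply Hc. }
  destruct (IPO Y HA G CA HG HA_map) as (H & CH & H_u & H_v & _).
  exists H. split; [auto|split; [|auto]].
  destruct (PO Y (fun a => g (u a)) (fun x => g (v x))) as (g' & _ & _ & _ & Uniq).
  { exact (continuous_comp u g Hu Hg). }
  { exact (continuous_comp v g Hv Hg). }
  { intros b; rewrite Huv; reflexivity. }
  intros p. rewrite (Uniq g Hg (fun _ => eq_refl) (fun _ => eq_refl)).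
  apply (Uniq (fun p => H (cyl_in k p))); [exact (continuous_comp _ H (continuous_cyl_in k) CH)| |].
  - intros a. exact (eq_trans (H_u (cyl_in k a)) (HA_in a)).
  - intros x. exact (eq_trans (H_v (cyl_in k x)) (eq_sym (Hc x))).
Qed.

Lemma pushout_axiom_holds : pushout_axiom.
Proof.
  intros B A X i f [_ Hi] Hf.
  exists (Quot (pushout_rel i f)), (fun a => qmap (pushout_rel i f) (inl a)),
    (fun x => qmap (pushout_rel i f) (inr x)).
  pose proof (IsPushout_quot i f) as PO. pose proof (IsPushout_cyl_quot i f) as IPO.
  split; [exact PO|split; [split|exact IPO]].
  - exact (proj1 (proj2 PO)).
  - exact (HEP_pushout i f _ _ Hi Hf PO IPO).
Qed.

Definition relcyl_rel {B A : LimSpace} (i : B -> A) (u v : LimSum A (LimSum (Cyl B) A)) : Prop :=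
  (exists b, u = inl (i b) /\ v = inr (inl (cyl_in false b))) \/
  (exists b, u = inr (inr (i b)) /\ v = inr (inl (cyl_in true b))).

Section RelativeCylinder.
Context {B A : LimSpace} (i : B -> A).
Let Z := LimSum A (LimSum (Cyl B) A).
Let q : Z -> Quot (relcyl_rel i) := qmap (relcyl_rel i).

Lemma IsRelCylColimit_quot :
  IsRelCylColimit i (fun a => q (inl a)) (fun z => q (inr (inl z))) (fun a => q (inr (inr a))).
Proof.
  pose proof (continuous_qmap (relcyl_rel i)) as Hq.
  split; [exact (continuous_comp _ _ continuous_inl Hq)|].
  split; [exact (continuous_comp _ _ (continuous_comp _ _ continuous_inl continuous_inr) Hq)|].
  split; [exact (continuous_comp _ _ (continuous_comp _ _ continuous_inr continuous_inr) Hq)|].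
  split; [intros b; apply qmap_rel; left; exists b; auto|].
  split; [intros b; apply qmap_rel; right; exists b; auto|].
  intros Y g0 h g1 Hg0 Hh Hg1 E0 E1.
  set (g := sum_elim g0 (sum_elim h g1) : Z -> Y).
  assert (Hresp : forall z w, relcyl_rel i z w -> g z = g w)
    by (intros z w [(b & -> & ->)|(b & -> & ->)]; [exact (E0 b)|exact (E1 b)]).
  exists (qlift (relcyl_rel i) g).
  split; [apply continuous_qlift; auto;
    exact (continuous_sum_elim _ _ Hg0 (continuous_sum_elim _ _ Hh Hg1))|].
  split; [intros a; apply (qlift_qmap _ g Hresp (inl a))|].
  split; [intros z; apply (qlift_qmap _ g Hresp (inr (inl z)))|].
  split; [intros a; apply (qlift_qmap _ g Hresp (inr (inr a)))|].
  intros k' Hk' E0' Ec' E1' p. rewrite <- (qmap_qrep _ p), (qlift_qmap _ g Hresp).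
  destruct (qrep _ p) as [a|[z|a]]; [apply E0'|apply Ec'|apply E1'].
Qed.

End RelativeCylinder.

Definition Indiscrete (T : Type) : LimSpace :=
  {| carrier := T; lconv := fun F _ => isFilter F;
     lconv_filter := fun F _ H => H;
     lconv_super := fun F G _ _ HG _ => HG;
     lconv_principal := fun x => isFilter_principal x;
     lconv_inter := fun F G _ H1 H2 => isFilter_finter F G H1 H2 |}.

Lemma continuous_to_indiscrete {X : LimSpace} {T : Type} (g : X -> Indiscrete T) : continuous g.
Proof. intros F x HF. apply isFilter_fimage, (lconv_filter X F x HF). Qed.

(** Uniqueness for maps into the indiscrete space [Prop]: the predicate "lies in one of the
    three images" agrees with [fun _ => True] on the three images, hence everywhere. *)
Lemma IsRelCylColimit_jointly_surjective {B A P : LimSpace} (i : B -> A)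
    (a0 : A -> P) (c : Cyl B -> P) (a1 : A -> P) :
  IsRelCylColimit i a0 c a1 ->
  forall p, (exists a, p = a0 a) \/ (exists z, p = c z) \/ (exists a, p = a1 a).
Proof.
  intros (_ & _ & _ & _ & _ & U) p.
  destruct (U (Indiscrete Prop) (fun _ => True) (fun _ => True) (fun _ => True))
    as (k & _ & _ & _ & _ & Uniq); try apply continuous_to_indiscrete; try reflexivity.
  set (inImage := fun p => (exists a, p = a0 a) \/ (exists z, p = c z) \/ (exists a, p = a1 a)).
  assert (E : inImage p = True).
  { rewrite (Uniq inImage), <- (Uniq (fun _ => True)); try apply continuous_to_indiscrete;
      try reflexivity; intros; apply propositional_extensionality; split; auto; intros _;
      unfold inImage; eauto. }
  change (inImage p); rewrite E; exact I.
Qed.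

Lemma HEP_relcyl_map {B A P : LimSpace} (i : B -> A) (a0 : A -> P) (c : Cyl B -> P)
    (a1 : A -> P) (j : P -> Cyl A) :
  HEP i -> IsRelCylColimit i a0 c a1 ->
  (forall a, j (a0 a) = cyl_in false a) -> (forall z, j (c z) = cyl_map i z) ->
  (forall a, j (a1 a) = cyl_in true a) -> HEP j.
Proof.
  intros Hi HC Ej0 Ejc Ej1. apply HEP_of_HEP_at_false.
  pose proof (IsRelCylColimit_jointly_surjective i a0 c a1 HC) as Hsurj.
  destruct HC as (Ca0 & Cc & Ca1 & Eq0 & Eq1 & _).
  intros Y f G Hf HG Hc.
  assert (E0 : forall a, f (a, I01_zero) = G (a0 a, I01_zero)).
  { intros a. change (f (cyl_in false a) = G (cyl_in false (a0 a))). rewrite <- Ej0. apply Hc. }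
  assert (E1 : forall a, f (a, I01_one) = G (a1 a, I01_zero)).
  { intros a. change (f (cyl_in true a) = G (cyl_in false (a1 a))). rewrite <- Ej1. apply Hc. }
  assert (Ec : forall b t, f (i b, t) = G (c (b, t), I01_zero)).
  { intros b t. change (f (cyl_map i (b, t)) = G (cyl_in false (c (b, t)))).
    rewrite <- Ejc. apply Hc. }
  assert (E0c : forall b s, G (a0 (i b), s) = G (c (b, I01_zero), s)).
  { intros b s. rewrite Eq0; reflexivity. }
  assert (E1c : forall b s, G (a1 (i b), s) = G (c (b, I01_one), s)).
  { intros b s. rewrite Eq1; reflexivity. }
  destruct (extend_three_faces i (HEP_at_cyl_map i false (Hi false)) Y f
              (fun z : Cyl A => G (a0 (fst z), snd z)) (fun z : Cyl A => G (a1 (fst z), snd z))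
              (fun v : Cyl (Cyl B) => G (c (fst v), snd v))
              Hf ltac:(continuity) ltac:(continuity) ltac:(continuity) E0 E1 Ec E0c E1c)
    as (H & CH & H_f & H_0 & H_1 & H_c).
  exists H. split; [auto|split; [intros [a t]; apply H_f|]].
  intros [p s]. unfold cyl_map; simpl.
  destruct (Hsurj p) as [(a & ->)|[((b & t) & ->)|(a & ->)]].
  - rewrite Ej0. apply H_0.
  - rewrite Ejc. apply H_c.
  - rewrite Ej1. apply H_1.
Qed.

Lemma relative_cylinder_axiom_holds : relative_cylinder_axiom.
Proof.
  intros B A i [_ Hi]. split.
  - eexists; do 3 eexists; apply IsRelCylColimit_quot.
  - intros P a0 c a1 HC j Hj Ej0 Ejc Ej1. split; auto.
    exact (HEP_relcyl_map i a0 c a1 j Hi HC Ej0 Ejc Ej1).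
Qed.

Theorem mainTheorem3 : Lim_is_ICategory.
Proof.
  exact (conj Lim_cylinder_data_holds (conj cylinder_axiom_holds (conj pushout_axiom_holds
          (conj cofibration_axiom_holds (conj interchange_axiom_holds
            relative_cylinder_axiom_holds))))).
Qed.
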